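(* Let $\mathcal{M}$ be an MRTA instance with robot-task graph $G=(R,T;E;c)$ such that $c$ is metric and injective on $E$. Then (1) $\textsc{Assign}(\mathcal{M})$ provides a 2-approximation for $\textsc{MinSum}(\mathcal{M})$, i.e. $C(\textsc{Assign}(\mathcal{M}))\le2\,C(\textsc{MinSum}(\mathcal{M}))$; and (2) $\textsc{Assign}(\mathcal{M})$ is robust over the interval family $\{(-\underline{\Delta}(e),\overline{\Delta}(e)]:e\in E\}$ output by $\textsc{AuctionSensitivity}(\mathcal{M},W,a)$, where $(W,a)=\textsc{Auction}(\mathcal{M})$: that is, for every edge cost function $c'$ on $E$ with $c'(e)\in(c(e)-\underline{\Delta}(e),c(e)+\overline{\Delta}(e)]$ for all $e\in E$, $\textsc{Auction}$ run with costs $c'$ produces the same list of winning edges $W$, and hence $\textsc{Assign}$ outputs the same plan.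
   Context: $R$ (robots) and $T$ (tasks) are finite disjoint sets with $R\neq\emptyset$, $|R\sqcup T|\ge3$. A metric cost $c$ on $R\sqcup T$ satisfies $c(x,y)\ge0$, $c(x,y)=0$ iff $x=y$, symmetry and the triangle inequality. The robot-task graph has vertex set $R\sqcup T$, edge set $E$ of all 2-element subsets, with edge costs $c(\{x,y\})=c(x,y)$; injective means distinct edges have distinct costs. The cost of a list $P=(v_0,\dots,v_n)$ is $C(P)=\sum_{i=0}^{n-1}c(v_i,v_{i+1})$. A robot-route is such a list with $v_0\in R$ and $v_j\in T$ for $j\ge1$; a plan is a family of $|R|$ robot-routes whose vertex sets partition $R\sqcup T$, with cost the sum of route costs; $\textsc{MinSum}(\mathcal{M})$ is a minimum-cost plan. $\textsc{Auction}$: set $A=\emptyset$, $a(r)=0$ for $r\in R$. For $k=1,\dots,|T|$: let $w_k=\{s,t\}$ be the edge with $s\in R\cup A$, $t\in T\setminus A$ minimising its cost; set $a(t)=k$, $A\leftarrow A\cup\{t\}$. Output $W=(w_1,\dots,w_{|T|})$ and $a$. $\textsc{DFShortcut}$: the edges of $W$ form a forest each of whose components contains exactly one robot. For each robot $r$ with component vertex set $V(r)$, start with $P(r)=(r)$ and, while $P(r)$ does not contain all of $V(r)$, scan $P(r)$ from last to first, and at the first vertex $t$ having a $W$-neighbour not in $P(r)$, append the such neighbour $s$ with smallest $a(s)$. Output $\{P(r):r\in R\}$. $\textsc{Assign}(\mathcal{M})=\textsc{DFShortcut}(\textsc{Auction}(\mathcal{M}))$. For $e=\{x,y\}$, $B_e=\{k\in\mathbb{Z}:\min(a(x),a(y))<k\le\max(a(x),a(y))\}$.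 $\textsc{AuctionSensitivity}(\mathcal{M},W,a)$ outputs $\textsc{ErrorIntervals}(G,W,a,I_0)$ where $I_0=\textsc{Initialiser}(G,W,a)$, defined as follows. $\textsc{Initialiser}$: set $L(e)=0$ for all $e$; process rounds $k$ in order of decreasing $c(w_k)$; for round $k$ let $E_k$ be the set of edges not appearing in $W$ with $k\in B_e$, set $M(e)=\max(L(e),\tfrac12(c(w_k)+c(e)))$ for $e\in E_k$, set $I_0(w_k)=\min_{e\in E_k}M(e)-c(w_k)$, then update $L(e)\leftarrow\max(L(e),c(w_k)+I_0(w_k))$ for $e\in E_k$. $\textsc{ErrorIntervals}$: $\overline{\Delta}(w_k)=I_0(w_k)$; if $e=w_K$ and $B_e\setminus\{K\}\ne\emptyset$, $\underline{\Delta}(e)=c(e)-\max_{k\in B_e\setminus\{K\}}(c(w_k)+\overline{\Delta}(w_k))$; if $e=w_K$ and $B_e\setminus\{K\}=\emptyset$, $\underline{\Delta}(e)=c(e)$; if $e$ is not in $W$, $\overline{\Delta}(e)=\infty$ and $\underline{\Delta}(e)=c(e)-\max_{k\in B_e}(c(w_k)+\overline{\Delta}(w_k))$. *)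

From HB Require Import structures.
From mathcomp Require Import all_boot all_order all_algebra.
From mathcomp Require Import reals constructive_ereal.
Set Implicit Arguments. Unset Strict Implicit. Unset Printing Implicit Defensive.
Import Order.TTheory GRing.Theory Num.Theory.
Local Open Scope ring_scope.

Section MRTA.
Variables (R : realType) (V : finType).
(* V = R ⊔ T ; [robot v] says v ∈ R, otherwise v ∈ T (a task). *)
Variable robot : pred V.

Definition task (v : V) : bool := ~~ robot v.

Definition metric (c : V -> V -> R) : Prop :=
  [/\ forall x y, 0 <= c x y,
      forall x y, c x y = 0 <-> x = y,
      forall x y, c x y = c y x
    & forall x y z, c x z <= c x y + c y z].

Definition injective_on_edges (c : V -> V -> R) : Prop :=
  forall x y u v, x != y -> u != v -> c x y = c u v ->
    (x = u /\ y = v) \/ (x = v /\ y = u).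

Fixpoint path_cost_from (c : V -> V -> R) (x : V) (s : seq V) : R :=
  match s with
  | [::] => 0
  | y :: s' => c x y + path_cost_from c y s'
  end.
Definition list_cost (c : V -> V -> R) (s : seq V) : R :=
  match s with [::] => 0 | x :: s' => path_cost_from c x s' end.

(* ---------- plans ----------
   A plan is given as the family (route r)_{r ∈ R}; route r is the robot-route
   of robot r (values of [route] at tasks are irrelevant). *)
Definition robot_route (r : V) (s : seq V) : Prop :=
  exists s', s = r :: s' /\ all task s'.

Definition is_plan (route : V -> seq V) : Prop :=
  (forall r, robot r -> robot_route r (route r)) /\
  (forall v, #|[pred r | robot r && (v \in route r)]| = 1%N).

Definition plan_cost (c : V -> V -> R) (route : V -> seq V) : R :=
  \sum_(r | robot r) list_cost c (route r).

Definition is_minsum (c : V -> V -> R) (P : V -> seq V) : Prop :=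
  is_plan P /\ forall Q, is_plan Q -> plan_cost c P <= plan_cost c Q.

(* ---------- Auction ----------
   W is the list of winning edges w_k = {s_k, t_k} (stored as the pair
   (s_k, t_k), s_k ∈ R ∪ A, t_k ∈ T \ A).  [auction_run c W] says that W is
   a possible output of Auction run with edge costs c (any tie-breaking). *)
Definition auction_run (c : V -> V -> R) (W : seq (V * V)) : Prop :=
  size W = #|[pred v | task v]| /\
  forall W1 s t W2, W = W1 ++ (s, t) :: W2 ->
    let A := [seq p.2 | p <- W1] in
    [/\ robot s || (s \in A), task t, t \notin A
      & forall s' t', robot s' || (s' \in A) -> task t' -> t' \notin A ->
          c s t <= c s' t'].

Definition alab (W : seq (V * V)) (v : V) : nat :=
  if robot v then 0%N else (index v [seq p.2 | p <- W]).+1.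

Definition wadj (W : seq (V * V)) (u s : V) : bool :=
  ((u, s) \in W) || ((s, u) \in W).

Definition dfs_step (W : seq (V * V)) (P : seq V) : seq V :=
  let out u := [seq s <- enum V | wadj W u s && (s \notin P)] in
  match [seq u <- rev P | out u != [::]] with
  | [::] => P
  | u :: _ =>
      match sort (fun x y => alab W x <= alab W y)%N (out u) with
      | s :: _ => rcons P s
      | [::] => P
      end
  end.

(* P(r): iterate the loop body; it is the identity once P(r) ⊇ V(r),
   and #|V| iterations suffice. *)
Definition dfshortcut (W : seq (V * V)) : V -> seq V :=
  fun r => iter #|V| (dfs_step W) [:: r].

Definition assign_plan (W : seq (V * V)) : V -> seq V := dfshortcut W.

Local Open Scope ereal_scope.

(* cost of w_k (rounds are numbered 1..|T|) *)
Definition wcost (c : V -> V -> R) (W : seq (V * V)) (k : nat) : R :=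
  nth 0%R [seq c p.1 p.2 | p <- W] k.-1.

Definition inW (W : seq (V * V)) (x y : V) : bool :=
  ((x, y) \in W) || ((y, x) \in W).

Definition inB (W : seq (V * V)) (x y : V) (k : nat) : bool :=
  (minn (alab W x) (alab W y) < k <= maxn (alab W x) (alab W y))%N.

Definition inE (W : seq (V * V)) (k : nat) (x y : V) : bool :=
  [&& x != y, ~~ inW W x y & inB W x y k].

(* one round of Initialiser; state = (L, I_0) *)
Definition init_step (c : V -> V -> R) (W : seq (V * V))
    (st : (V -> V -> \bar R) * (nat -> \bar R)) (k : nat)
    : (V -> V -> \bar R) * (nat -> \bar R) :=
  let L := st.1 in let I := st.2 in
  let ck := wcost c W k in
  let i := (\big[mine/+oo]_(p : V * V | inE W k p.1 p.2)
               maxe (L p.1 p.2) (((ck + c p.1 p.2) / 2%:R)%R)%:E) - ck%:E in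
  (fun x y => if inE W k x y then maxe (L x y) (ck%:E + i) else L x y,
   fun j => if j == k then i else I j).

Definition initialiser (c : V -> V -> R) (W : seq (V * V)) : nat -> \bar R :=
  (foldl (init_step c W) (fun _ _ => 0, fun _ => 0)
     (sort (fun i j => wcost c W j <= wcost c W i)%R (iota 1 (size W)))).2.

Definition roundof (W : seq (V * V)) (x y : V) : nat :=
  if (x, y) \in W then (index (x, y) W).+1 else (index (y, x) W).+1.

Definition dup (c : V -> V -> R) (W : seq (V * V)) (x y : V) : \bar R :=
  if inW W x y then initialiser c W (roundof W x y) else +oo.

Definition thr (c : V -> V -> R) (W : seq (V * V)) (S : pred nat) : \bar R :=
  \big[maxe/-oo]_(k <- iota 1 (size W) | S k)
     ((wcost c W k)%:E + initialiser c W k).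

Definition dlow (c : V -> V -> R) (W : seq (V * V)) (x y : V) : \bar R :=
  if inW W x y then
    let K := roundof W x y in
    let S := [pred k | inB W x y k && (k != K)] in
    if ~~ has S (iota 1 (size W)) then (c x y)%:E
    else (c x y)%:E - thr c W S
  else (c x y)%:E - thr c W (inB W x y).

End MRTA.

(* Auction is Prim's algorithm grown from all robots at once.  Its winning edges
   W form a forest in which every task hangs below a unique robot; removing the
   first winner and turning its task into a robot shows, by induction, that c(W)
   is at most the cost of any edge set linking every task to a robot, in
   particular of the edges of any plan.  DFShortcut walks each tree of W
   depth-first, and by the triangle inequality each step preserves
     (cost of the walk) + root_dist (its last vertex) <= 2 * (tree edges covered),
   so the whole plan costs at most 2 c(W).

   For robustness: in round k the winner w_k satisfies
   c'(w_k) <= c(w_k) + dup(w_k), while every other edge e available in round k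
   has k in B_e and k is not e's own round, so
   c'(e) > c(e) - dlow(e) >= c(w_k) + dup(w_k).  Hence w_k is the strict
   c'-minimum and Auction with costs c' retraces W round by round.  No property
   of the values computed by Initialiser is used, and neither the injectivity of
   c nor the assumptions on |R| and |V| are needed. *)

From HB Require Import structures.
From mathcomp Require Import all_boot all_order all_algebra.
From mathcomp Require Import reals constructive_ereal.
From mathcomp Require Import lra zify.
Import Order.TTheory GRing.Theory Num.Theory.
Local Open Scope ring_scope.
Set Implicit Arguments. Unset Strict Implicit. Unset Printing Implicit Defensive.

Lemma uniq_map_split (T U : eqType) (f : T -> U) (s : seq T) :
  (forall s1 x s2, s = s1 ++ x :: s2 -> f x \notin map f s1) -> uniq (map f s).
Proof.
elim/last_ind: s => [//|s x IH] Hs; rewrite map_rcons rcons_uniq.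
apply/andP; split; first by apply: (Hs s x [::]); rewrite cats1.
by apply: IH => s1 y s2 E; apply: (Hs s1 y (rcons s2 x)); rewrite E rcons_cat.
Qed.

Lemma eq_from_common_prefix (T : Type) (s1 s2 : seq T) :
  size s1 = size s2 ->
  (forall p x y q1 q2, s1 = p ++ x :: q1 -> s2 = p ++ y :: q2 -> x = y) ->
  s1 = s2.
Proof.
elim: s1 s2 => [|x s1 IH] [|y s2] //= -[Esz] Hs.
have Exy : x = y by apply: (Hs [::] x y s1 s2).
subst y; congr (_ :: _); apply: IH => // p a b q1 q2 E1 E2.
by apply: (Hs (x :: p) a b q1 q2); rewrite /= ?E1 ?E2.
Qed.

Lemma filter_eq_cons (T : eqType) (a : pred T) (s : seq T) u L :
  [seq x <- s | a x] = u :: L ->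
  exists pre post, s = pre ++ u :: post /\ all (predC a) pre.
Proof.
elim: s => [//|y s IH] /=; case: ifP => ay.
  by case=> <- _; exists [::], s.
move=> /IH [pre [post [-> Hpre]]]; exists (y :: pre), post.
by rewrite /= ay Hpre.
Qed.

Lemma path_first_hit (T : Type) (e : rel T) (a : pred T) x p :
  ~~ a x -> path e x p -> a (last x p) ->
  exists q y, [/\ path e x q, all (predC a) (x :: q), e (last x q) y & a y].
Proof.
elim: p x => [|y p IH] x /=; first by move=> /negbTE ->.
move=> nax /andP [exy Hp] Hlast; case ay: (a y).
  by exists [::], y; rewrite /= nax.
have [q [z [Hq Hall Hez az]]] := IH y (negbT ay) Hp Hlast.
by exists (y :: q), z; rewrite /= exy nax.
Qed.

Section Metric.
Variables (R : realType) (V : finType) (c : V -> V -> R).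
Hypothesis hmet : metric c.

Lemma metric_ge0 x y : 0 <= c x y.
Proof. by case: hmet. Qed.

Lemma metric_xx x : c x x = 0.
Proof. by case: hmet => _ h _ _; apply/h. Qed.

Lemma metric_sym x y : c x y = c y x.
Proof. by case: hmet. Qed.

Lemma metric_tri x y z : c x z <= c x y + c y z.
Proof. by case: hmet. Qed.

End Metric.

Section Auction.
Variables (R : realType) (V : finType) (robot : pred V).
Variables (c : V -> V -> R) (W : seq (V * V)).

Definition available (A : seq V) (s t : V) : bool :=
  [&& robot s || (s \in A), task robot t & t \notin A].

Lemma available_neq A s t : available A s t -> s != t.
Proof.
case/and3P=> hs ht hA; apply: contraTneq hs => ->.
by rewrite negb_or (negbTE ht) hA.
Qed.

Definition parent (x : V) : V :=
  if robot x then x else nth x (map fst W) (index x (map snd W)).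

Lemma parent_robot x : robot x -> parent x = x.
Proof. by rewrite /parent => ->. Qed.

Hypothesis hW : auction_run robot c W.

Lemma auction_round W1 s t W2 : W = W1 ++ (s, t) :: W2 ->
  available (map snd W1) s t /\
  forall s' t', available (map snd W1) s' t' -> c s t <= c s' t'.
Proof.
case: hW => _ Hstep EW; case: (Hstep _ _ _ _ EW) => hs ht hA Hmin.
by split=> [|s' t' /and3P [] *]; [apply/and3P | apply: Hmin].
Qed.

Lemma auction_winner_round p : p \in W -> exists W1 W2, W = W1 ++ p :: W2 /\
  available (map snd W1) p.1 p.2.
Proof.
move=> pW; have [W1 [W2 EW]] : exists W1 W2, W = W1 ++ p :: W2.
  by case/splitPr: pW => W1 W2; exists W1, W2.
exists W1, W2; split => //.
by case: p EW {pW} => s t /auction_round [].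
Qed.

Lemma auction_size : size W = #|[pred v | task robot v]|.
Proof. by case: hW. Qed.

Lemma uniq_auction_tasks : uniq (map snd W).
Proof.
by apply: uniq_map_split => W1 [s t] W2 /auction_round [/and3P []].
Qed.

Lemma mem_auction_tasks x : (x \in map snd W) = task robot x.
Proof.
apply/idP/idP => [/mapP [p pW ->] | tx].
  by have [W1 [W2 [_ /and3P []]]] := auction_winner_round pW.
have sub : [pred y in map snd W] \subset [pred v | task robot v].
  by apply/subsetP => y /mapP [p pW ->]; have [? [? [_ /and3P []]]] := auction_winner_round pW.
have Ecard : #|[pred y in map snd W]| = #|[pred v | task robot v]|.
  by rewrite (card_uniqP uniq_auction_tasks) size_map auction_size.
by have := subset_cardP Ecard sub => /(_ x); rewrite !inE /= tx.
Qed.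

Lemma parent_winner p : p \in W -> parent p.2 = p.1.
Proof.
move=> pW; have [W1 [W2 [EW /and3P [_ tp np]]]] := auction_winner_round pW.
rewrite /parent (negbTE tp) EW !map_cat index_cat (negbTE np) /= eqxx addn0.
by rewrite nth_cat !size_map ltnn subnn.
Qed.

Lemma parent_edge t : task robot t -> (parent t, t) \in W.
Proof.
rewrite -mem_auction_tasks => /mapP [p pW ->].
by rewrite (parent_winner pW) -surjective_pairing.
Qed.

Lemma alab_winner p : p \in W -> (alab robot W p.1 < alab robot W p.2)%N.
Proof.
move=> pW; have [W1 [W2 [EW /and3P [sp tp np]]]] := auction_winner_round pW.
rewrite /alab (negbTE tp); case: ifP => // rs; move: sp; rewrite rs /= => sp.
by rewrite EW !map_cat !index_cat sp (negbTE np) /= eqxx addn0 ltnS index_mem.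
Qed.

Lemma alab_parent t : task robot t -> (alab robot W (parent t) < alab robot W t)%N.
Proof. by move/parent_edge/alab_winner. Qed.

Lemma alab_le_size x : (alab robot W x <= size W)%N.
Proof.
rewrite /alab; case: ifP => // rx.
by rewrite -(size_map snd) index_mem mem_auction_tasks /task rx.
Qed.

Lemma size_auction_le_card : (size W <= #|V|)%N.
Proof. by rewrite auction_size max_card. Qed.

Lemma sum_parent_cost :
  \sum_(t | task robot t) c (parent t) t = \sum_(p <- W) c p.1 p.2.
Proof.
rewrite (eq_big_seq (fun p => c (parent p.2) p.2)) => [|p pW]; last first.
  by rewrite (parent_winner pW).
rewrite -(big_map snd xpredT (fun t => c (parent t) t)) big_uniq ?uniq_auction_tasks //.
by apply: eq_bigl => t; rewrite mem_auction_tasks.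
Qed.

End Auction.

Section Sensitivity.
Variables (R : realType) (V : finType) (robot : pred V).
Variables (c : V -> V -> R) (W : seq (V * V)).
Local Open Scope ereal_scope.

Lemma EFin_subKr (x : R) (y : \bar R) : x%:E - (x%:E - y) = y.
Proof. by case: y => [y| |] //=; rewrite -!EFinD; congr EFin; lra. Qed.

Lemma le_thr (S : pred nat) k : k \in iota 1 (size W) -> S k ->
  (wcost c W k)%:E + initialiser robot c W k <= thr robot c W S.
Proof.
rewrite /thr; elim: (iota 1 (size W)) => [//|j s IH].
rewrite inE big_cons => /orP [/eqP <- -> | ks Sk]; first by rewrite le_max lexx.
by case: ifP => _; rewrite ?le_max IH ?orbT.
Qed.

Lemma nth_roundof d x y :
  inW W x y -> nth d W (roundof W x y).-1 \in [:: (x, y); (y, x)].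
Proof.
rewrite /inW /roundof; case: ifP => [xyW _ | _ yxW] /=.
  by rewrite nth_index ?mem_head.
by rewrite nth_index // !inE eqxx orbT.
Qed.

Lemma thr_le_dlow x y k : k \in iota 1 (size W) -> inB robot W x y k ->
  (inW W x y -> roundof W x y != k) ->
  (wcost c W k)%:E + initialiser robot c W k <= (c x y)%:E - dlow robot c W x y.
Proof.
move=> kW hk hK; rewrite /dlow; case: ifP => [hin | _]; last first.
  by rewrite EFin_subKr; apply: le_thr.
have Sk : inB robot W x y k && (k != roundof W x y) by rewrite hk eq_sym hK.
have -> : has [pred j | inB robot W x y j && (j != roundof W x y)] (iota 1 (size W)).
  by apply/hasP; exists k.
by rewrite /= EFin_subKr; apply: le_thr.
Qed.

Variables (W1 W2 : seq (V * V)) (s t : V).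
Hypothesis EW : W = W1 ++ (s, t) :: W2.

Lemma wcost_round : wcost c W (size W1).+1 = c s t.
Proof. by rewrite /wcost EW map_cat nth_cat size_map ltnn subnn. Qed.

Lemma round_in_iota : (size W1).+1 \in iota 1 (size W).
Proof. by rewrite mem_iota EW size_cat /=; lia. Qed.

Lemma available_inB s' t' : available robot (map snd W1) s' t' ->
  inB robot W s' t' (size W1).+1.
Proof.
case/and3P=> hs' ht' hn'.
have h1 : (alab robot W s' <= size W1)%N.
  rewrite /alab; case: ifP => // rs; move: hs'; rewrite rs /= => hs'.
  by rewrite EW map_cat index_cat hs' -(size_map snd) index_mem.
have h2 : (size W1 < alab robot W t')%N.
  by rewrite /alab (negbTE ht') EW map_cat index_cat (negbTE hn') size_map; lia.
by rewrite /inB; lia.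
Qed.

Hypothesis t_new : t \notin map snd W1.

Lemma roundof_round : roundof W s t = (size W1).+1.
Proof.
rewrite /roundof EW mem_cat mem_head orbT index_cat ifF /= ?eqxx ?addn0 //.
by apply: contraNF t_new => stW1; apply/mapP; exists (s, t).
Qed.

Lemma dup_round : dup robot c W s t = initialiser robot c W (size W1).+1.
Proof. by rewrite /dup /inW EW mem_cat mem_head orbT -EW roundof_round. Qed.

Lemma available_roundof_neq s' t' : task robot t ->
  available robot (map snd W1) s' t' -> (s', t') != (s, t) ->
  inW W s' t' -> roundof W s' t' != (size W1).+1.
Proof.
move=> ht /and3P [hs' _ _] hne hin; apply/eqP => Ek.
have := nth_roundof (s, t) hin; rewrite Ek /= EW nth_cat ltnn subnn /=.
rewrite !inE eq_sym (negbTE hne) /= => /eqP [_ Ets].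
by move: hs'; rewrite -Ets /= (negbTE ht) (negbTE t_new).
Qed.

End Sensitivity.

Section Robustness.
Variables (R : realType) (V : finType) (robot : pred V).
Variables (c c' : V -> V -> R) (W : seq (V * V)).
Hypothesis hW : auction_run robot c W.
Hypothesis hc' : forall x y, x != y ->
  ((c x y)%:E - dlow robot c W x y < (c' x y)%:E)%E /\
  ((c' x y)%:E <= (c x y)%:E + dup robot c W x y)%E.

Lemma auction_winner_strict_min W1 s t W2 s' t' : W = W1 ++ (s, t) :: W2 ->
  available robot (map snd W1) s' t' -> (s', t') != (s, t) -> c' s t < c' s' t'.
Proof.
move=> EW avail' hne; have [avail _] := auction_round hW EW.
have /and3P [_ ht t_new] := avail.
have [_ up] := hc' (available_neq avail).
have [low _] := hc' (available_neq avail').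
rewrite (dup_round robot c EW t_new) -(wcost_round c EW) in up.
rewrite -lte_fin (le_lt_trans up) // (le_lt_trans _ low) //.
apply: thr_le_dlow; first exact: round_in_iota EW.
  exact: (available_inB EW avail').
exact: (available_roundof_neq EW t_new ht avail' hne).
Qed.

Lemma auction_robust W' : auction_run robot c' W' -> W' = W.
Proof.
move=> hW'; apply: eq_from_common_prefix.
  by rewrite (auction_size hW') (auction_size hW).
move=> W1 [s' t'] [s t] W2' W2 EW' EW; apply/eqP; apply/negPn/negP => hne.
have [avail _] := auction_round hW EW.
have [avail' /(_ _ _ avail) le'] := auction_round hW' EW'.
by have := auction_winner_strict_min EW avail' hne; rewrite ltNge le'.
Qed.

End Robustness.


Section AuctionForest.
Variables (R : realType) (V : finType) (robot : pred V).
Variables (c : V -> V -> R) (W : seq (V * V)).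
Hypothesis hW : auction_run robot c W.
Hypothesis hmet : metric c.

Local Notation parent := (parent robot W).

Definition root (x : V) : V := iter #|V| parent x.

Definition ancestor (u v : V) : Prop := exists n, iter n parent v = u.

(* #|V| terms suffice: past the root every term is c r r = 0. *)
Definition root_dist (x : V) : R :=
  \sum_(i < #|V|) c (iter i.+1 parent x) (iter i parent x).

Lemma iter_parent_robot n r : robot r -> iter n parent r = r.
Proof. by move=> rr; elim: n => //= n ->; rewrite parent_robot. Qed.

Lemma robot_iter_parent n x : (alab robot W x <= n)%N -> robot (iter n parent x).
Proof.
elim: n x => [|n IH] x; first by rewrite leqn0 /alab; case: ifP.
move=> hx; rewrite iterSr; case rx: (robot x).
  by rewrite parent_robot //; apply: IH; rewrite /alab rx.
by apply: IH; have := alab_parent hW (negbT rx); lia.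
Qed.

Lemma robot_root x : robot (root x).
Proof.
apply: robot_iter_parent.
exact: leq_trans (alab_le_size hW x) (size_auction_le_card hW).
Qed.

Lemma root_parent x : root (parent x) = root x.
Proof. by rewrite /root -iterSr iterS parent_robot ?robot_root. Qed.

Lemma root_dist_robot r : robot r -> root_dist r = 0.
Proof.
move=> rr; rewrite /root_dist big1 // => i _.
by rewrite !iter_parent_robot ?(metric_xx hmet).
Qed.

Lemma root_dist_ge0 x : 0 <= root_dist x.
Proof. by apply: sumr_ge0 => i _; apply: metric_ge0. Qed.

Lemma root_dist_task t : task robot t ->
  root_dist t = c (parent t) t + root_dist (parent t).
Proof.
move=> tt; have := robot_root t; rewrite /root_dist /root.
have : (0 < #|V|)%N by apply/card_gt0P; exists t.
case: #|V| => [//|N] _ rt; rewrite big_ord_recl big_ord_recr /=.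
rewrite -[iter N parent (parent t)]iterSr (parent_robot _ rt) (metric_xx hmet).
rewrite addr0; congr (_ + _).
by apply: eq_bigr => i _; rewrite add0n -!iterSr.
Qed.

Lemma ancestor_refl x : ancestor x x.
Proof. by exists 0%N. Qed.

Lemma ancestor_parent x t : ancestor x (parent t) -> ancestor x t.
Proof. by move=> [n En]; exists n.+1; rewrite iterSr. Qed.

Lemma ancestor_total x u v :
  ancestor x v -> ancestor u v -> ancestor x u \/ ancestor u x.
Proof.
move=> [i <-] [j <-]; case: (leqP j i) => hij.
  by left; exists (i - j)%N; rewrite -iterD subnK.
by right; exists (j - i)%N; rewrite -iterD subnK // ltnW.
Qed.

Lemma ancestor_cost u v : ancestor u v -> c u v <= root_dist v - root_dist u.
Proof.
move=> [n <-]; elim: n v => [|n IH] v; first by rewrite (metric_xx hmet) subrr.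
rewrite iterSr; case rv: (robot v); first by have := IH v; rewrite parent_robot.
have := IH (parent v); have := metric_tri hmet (iter n parent (parent v)) (parent v) v.
by rewrite [root_dist v]root_dist_task /task ?rv //; lra.
Qed.

Lemma wadj_parent u s : wadj W u s ->
  (task robot s /\ parent s = u) \/ (task robot u /\ parent u = s).
Proof.
have winner p : p \in W -> task robot p.2 /\ parent p.2 = p.1.
  move=> pW; rewrite -(mem_auction_tasks hW) (parent_winner hW pW).
  by split=> //; apply/mapP; exists p.
by case/orP=> /winner; [left | right].
Qed.

End AuctionForest.

Lemma index_after_rev_split (T : eqType) (P pre post : seq T) u x :
  uniq P -> rev P = pre ++ u :: post -> x \in P ->
  (index u P < index x P)%N -> x \in pre.
Proof.
move=> U E; have EP : P = rcons (rev post) u ++ rev pre.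
  by rewrite -[P]revK E rev_cat rev_cons.
move: U; rewrite EP cat_uniq rcons_uniq => /andP [/andP [u_post _] _].
rewrite mem_cat mem_rev => /orP [x_init | //].
rewrite !index_cat x_init mem_rcons mem_head -cats1 index_cat (negbTE u_post) /=.
rewrite eqxx addn0 size_rev cats1; move: x_init.
by rewrite -index_mem size_rcons size_rev ltnS => /leq_ltn_trans h /h; rewrite ltnn.
Qed.

Lemma index_rcons_mem (T : eqType) (P : seq T) x y :
  x \in P -> index x (rcons P y) = index x P.
Proof. by move=> xP; rewrite -cats1 index_cat xP. Qed.

Lemma path_cost_from_rcons (R : realType) (V : finType) (c : V -> V -> R) x s y :
  path_cost_from c x (rcons s y) = path_cost_from c x s + c (last x s) y.
Proof. by elim: s x => [|z s IH] x /=; rewrite ?add0r ?addr0 // IH addrA. Qed.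

Section DepthFirst.
Variables (R : realType) (V : finType) (robot : pred V).
Variables (c : V -> V -> R) (W : seq (V * V)).
Hypothesis hW : auction_run robot c W.
Hypothesis hmet : metric c.

Local Notation parent := (parent robot W).
Local Notation ancestor := (ancestor robot W).
Local Notation root := (root robot W).
Local Notation root_dist := (root_dist robot c W).

Definition unvisited (P : seq V) (u : V) : seq V :=
  [seq s <- enum V | wadj W u s && (s \notin P)].

Lemma unvisited_nil P x y : unvisited P x = [::] -> wadj W x y -> y \in P.
Proof.
move=> done xy; apply/negPn/negP => yN.
suff : y \in unvisited P x by rewrite done.
by rewrite mem_filter xy yN mem_enum.
Qed.

Definition tree_cost (P : seq V) : R := \sum_(x <- P | task robot x) c (parent x) x.

Lemma dfs_stepP P : uniq P ->
  (dfs_step robot W P = P /\ forall u, u \in P -> unvisited P u = [::]) \/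
  exists u s, [/\ u \in P, s \in unvisited P u,
    forall x, x \in P -> (index u P < index x P)%N -> unvisited P x = [::]
  & dfs_step robot W P = rcons P s].
Proof.
move=> U; rewrite /dfs_step.
case E: [seq u <- rev P | unvisited P u != [::]] => [|u L].
  left; split => // u uP; apply/eqP/negPn/negP => h.
  have : u \in [seq u <- rev P | unvisited P u != [::]] by rewrite mem_filter h mem_rev.
  by rewrite E.
right; have [pre [post [Er pre_done]]] := filter_eq_cons E.
have : u \in [seq u <- rev P | unvisited P u != [::]] by rewrite E mem_head.
rewrite mem_filter => /andP [+ _].
rewrite -size_eq0 -(size_sort (fun x y => alab robot W x <= alab robot W y)%N).
case Es: (sort _ _) => [//|s L'] _; exists u, s; split.
- by rewrite -mem_rev Er mem_cat mem_head orbT.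
- by rewrite -(mem_sort (fun x y => alab robot W x <= alab robot W y)%N) Es mem_head.
- move=> x xP /(index_after_rev_split U Er xP) xpre.
  by apply/eqP; move: (allP pre_done x xpre); rewrite /= negbK.
- by [].
Qed.

Record dfs_inv (r : V) (P : seq V) : Prop := DfsInv {
  dfs_head : P = r :: behead P;
  dfs_uniq : uniq P;
  dfs_parent_before : forall x, x \in P -> x != r ->
    task robot x && (index (parent x) P < index x P)%N;
  dfs_root : forall x, x \in P -> root x = r;
  dfs_frontier : forall x, x \in P ->
    ancestor x (last r P) \/ forall y, wadj W x y -> y \in P;
  dfs_cost : list_cost c P + root_dist (last r P) <= 2%:R * tree_cost P }.

Lemma dfs_inv_init r : robot r -> dfs_inv r [:: r].
Proof.
move=> rr; split => //.
- by move=> x; rewrite inE => /eqP ->; rewrite eqxx.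
- by move=> x; rewrite inE => /eqP ->; apply: iter_parent_robot.
- by move=> x; rewrite inE => /eqP ->; left; apply: ancestor_refl.
- by rewrite /tree_cost big_cons big_nil /task rr (root_dist_robot _ hmet rr) mulr0 addr0.
Qed.

Section Invariant.
Variables (r : V) (P : seq V).
Hypotheses (rr : robot r) (hI : dfs_inv r P).

Lemma dfs_parent_in x : x \in P -> x != r -> parent x \in P.
Proof.
move=> xP xr; have /andP [_ lt] := dfs_parent_before hI xP xr.
by rewrite -index_mem (ltn_trans lt) // index_mem.
Qed.

Lemma dfs_index_ancestor x y : x \in P -> ancestor y x -> y != x ->
  (index y P < index x P)%N.
Proof.
move=> + [n <-]; elim: n x => [|n IH] x xP; first by rewrite eqxx.
have [-> | xr] := eqVneq x r; first by rewrite iter_parent_robot ?eqxx.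
have /andP [_ lt] := dfs_parent_before hI xP xr.
rewrite iterSr; have [-> // | ne] := eqVneq (iter n parent (parent x)) (parent x).
by move=> _; apply: ltn_trans lt; apply: IH ne; apply: dfs_parent_in.
Qed.

Variables (u s : V).
Hypotheses (uP : u \in P) (s_new : s \in unvisited P u).
Hypothesis later_done :
  forall x, x \in P -> (index u P < index x P)%N -> unvisited P x = [::].

Lemma wadj_unvisited : wadj W u s.
Proof. by move: s_new; rewrite mem_filter => /andP [/andP []]. Qed.

Lemma unvisited_notin : s \notin P.
Proof. by move: s_new; rewrite mem_filter => /andP [/andP []]. Qed.

Lemma unvisited_child : task robot s /\ parent s = u.
Proof.
case: (wadj_parent hW wadj_unvisited) => // [[tu pu]].
have ur : u != r by apply: contraTneq tu => ->; rewrite /task rr.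
by have := dfs_parent_in uP ur; rewrite pu (negbTE unvisited_notin).
Qed.

Lemma ancestor_last : ancestor u (last r P).
Proof.
case: (dfs_frontier hI uP) => // closed.
by have := closed s wadj_unvisited; rewrite (negbTE unvisited_notin).
Qed.

Lemma dfs_frontier_rcons x : x \in rcons P s ->
  ancestor x s \/ forall y, wadj W x y -> y \in rcons P s.
Proof.
have [ts ps] := unvisited_child.
rewrite mem_rcons inE => /orP [/eqP -> | xP]; first by left; apply: ancestor_refl.
have below_u : ancestor x u -> ancestor x s by rewrite -ps; apply: ancestor_parent.
case: (dfs_frontier hI xP) => [xlast | closed]; last first.
  by right => y /closed yP; rewrite mem_rcons inE yP orbT.
case: (ancestor_total xlast ancestor_last) => [/below_u | ux]; first by left.
have [Eux | xu] := eqVneq u x.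
  by left; apply: below_u; rewrite Eux; apply: ancestor_refl.
right => y xy; rewrite mem_rcons inE; apply/orP; right.
exact: unvisited_nil (later_done xP (dfs_index_ancestor xP ux xu)) xy.
Qed.

Lemma dfs_cost_rcons :
  list_cost c (rcons P s) + root_dist s <= 2%:R * tree_cost (rcons P s).
Proof.
have [ts ps] := unvisited_child.
have -> : list_cost c (rcons P s) = list_cost c P + c (last r P) s.
  by rewrite (dfs_head hI) rcons_cons /= path_cost_from_rcons.
have -> : tree_cost (rcons P s) = tree_cost P + c u s.
  by rewrite /tree_cost big_rcons ts ps.
rewrite root_dist_task // ps.
have := dfs_cost hI; have := ancestor_cost hW hmet ancestor_last.
have := metric_tri hmet (last r P) u s; rewrite (metric_sym hmet u (last r P)); lra.
Qed.

Lemma dfs_inv_rcons : dfs_inv r (rcons P s).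
Proof.
have [ts ps] := unvisited_child.
split; rewrite ?last_rcons.
- by rewrite (dfs_head hI) rcons_cons.
- by rewrite rcons_uniq unvisited_notin (dfs_uniq hI).
- move=> x; rewrite mem_rcons inE => /orP [/eqP -> _ | xP xr].
    rewrite ts ps index_rcons_mem // -cats1 index_cat (negbTE unvisited_notin).
    by rewrite /= eqxx addn0 index_mem.
  have /andP [-> lt] := dfs_parent_before hI xP xr.
  by rewrite !index_rcons_mem // dfs_parent_in.
- move=> x; rewrite mem_rcons inE => /orP [/eqP -> | /(dfs_root hI) //].
  by rewrite -(root_parent hW) ps (dfs_root hI).
- exact: dfs_frontier_rcons.
- exact: dfs_cost_rcons.
Qed.

End Invariant.

Lemma dfs_inv_step r P : robot r -> dfs_inv r P -> dfs_inv r (dfs_step robot W P).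
Proof.
move=> rr hI; case: (dfs_stepP (dfs_uniq hI)) =>
  [[-> _] // | [u [s [uP s_new later ->]]]].
exact: (dfs_inv_rcons rr hI uP s_new later).
Qed.

Lemma dfs_inv_dfshortcut r : robot r -> dfs_inv r (dfshortcut robot W r).
Proof.
move=> rr; rewrite /dfshortcut; elim: #|V| => [|n IH] /=; first exact: dfs_inv_init.
exact: dfs_inv_step.
Qed.

Lemma size_dfs_step P :
  dfs_step robot W P = P \/ size (dfs_step robot W P) = (size P).+1.
Proof.
rewrite /dfs_step; case: [seq u <- rev P | _] => [|u _]; first by left.
by case: sort => [|s _]; [left | right; rewrite size_rcons].
Qed.

Lemma dfshortcut_fixed r : robot r ->
  dfs_step robot W (dfshortcut robot W r) = dfshortcut robot W r.
Proof.
move=> rr; pose P n := iter n (dfs_step robot W) [:: r].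
have grow n : dfs_step robot W (P n) = P n \/ (n < size (P n))%N.
  elim: n => [|n [fixed | lt]]; [by right | by left; rewrite /= fixed | ].
  by case: (size_dfs_step (P n)) => E; [left | right]; rewrite /= E.
case: (grow #|V|) => // lt; have := dfs_uniq (dfs_inv_dfshortcut rr).
by move/card_uniqP; rewrite -/(P #|V|) => Esz; move: lt; rewrite -Esz ltnNge max_card.
Qed.

Lemma dfshortcut_closed r x y : robot r ->
  x \in dfshortcut robot W r -> wadj W x y -> y \in dfshortcut robot W r.
Proof.
move=> rr; have hI := dfs_inv_dfshortcut rr; have fixed := dfshortcut_fixed rr.
case: (dfs_stepP (dfs_uniq hI)) => [[_ done] xP | [u [s [_ _ _ E]]]].
  exact/unvisited_nil/done.
by move: (congr1 size fixed); rewrite E size_rcons => /esym/n_Sn.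
Qed.

Lemma mem_dfshortcut r x : robot r -> (x \in dfshortcut robot W r) = (root x == r).
Proof.
move=> rr; apply/idP/eqP => [/(dfs_root (dfs_inv_dfshortcut rr)) // | Ex].
suff up k y : iter k parent y \in dfshortcut robot W r -> y \in dfshortcut robot W r.
  by apply: (up #|V|); rewrite -/(root x) Ex (dfs_head (dfs_inv_dfshortcut rr)) mem_head.
elim: k y => [//|k IH] y; rewrite iterSr => /IH py.
case ry: (robot y); first by rewrite -(parent_robot W ry).
apply: (dfshortcut_closed rr py); apply/orP; left.
by apply: (parent_edge hW); rewrite /task ry.
Qed.

Lemma dfshortcut_is_plan : is_plan robot (dfshortcut robot W).
Proof.
split=> [r rr | v].
  have hI := dfs_inv_dfshortcut rr; exists (behead (dfshortcut robot W r)).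
  split; first exact: (dfs_head hI).
  apply/allP => x x_tail; have := dfs_uniq hI; rewrite (dfs_head hI) /= => /andP [rN _].
  have xr : x != r by apply/eqP => Exr; move: x_tail; rewrite Exr (negbTE rN).
  have xP : x \in dfshortcut robot W r by rewrite (dfs_head hI) inE x_tail orbT.
  by case/andP: (dfs_parent_before hI xP xr).
rewrite -(card1 (root v)); apply: eq_card => r; rewrite !inE.
case rr: (robot r); first by rewrite mem_dfshortcut // eq_sym.
by apply/esym/eqP => Er; move: rr; rewrite Er (robot_root hW).
Qed.

Lemma dfshortcut_cost :
  plan_cost robot c (dfshortcut robot W) <= 2%:R * \sum_(t | task robot t) c (parent t) t.
Proof.
rewrite (partition_big root robot) => [|t _]; last exact: (robot_root hW).
rewrite mulr_sumr; apply: ler_sum => r rr; have hI := dfs_inv_dfshortcut rr.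
have Etree : tree_cost (dfshortcut robot W r) =
    \sum_(t | task robot t && (root t == r)) c (parent t) t.
  rewrite /tree_cost big_mkcond big_uniq ?(dfs_uniq hI) // -big_mkcondr.
  by apply: eq_bigl => x; rewrite mem_dfshortcut // andbC.
have := dfs_cost hI; have := root_dist_ge0 robot W hmet (last r (dfshortcut robot W r)).
by rewrite Etree; lra.
Qed.

End DepthFirst.

Section SpanningLowerBound.
Variables (R : realType) (V : finType) (c : V -> V -> R).
Hypothesis hmet : metric c.

Definition links_tasks (robot : pred V) (F : seq (V * V)) : Prop :=
  forall t, task robot t -> exists2 r, robot r & connect (wadj F) t r.

Definition drop_edge (F : seq (V * V)) (x y : V) : seq (V * V) :=
  [seq f <- F | (f != (x, y)) && (f != (y, x))].

Lemma wadj_sym (F : seq (V * V)) : symmetric (wadj F).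
Proof. by move=> x y; rewrite /wadj orbC. Qed.

Lemma path_wadj_zip (F : seq (V * V)) x s :
  {subset zip (x :: s) s <= F} -> path (wadj F) x s.
Proof.
elim: s x => [//|y s IH] x /= sub; rewrite /wadj sub ?mem_head //=.
by apply: IH => f fz; apply: sub; rewrite inE fz orbT.
Qed.

Lemma wadj_drop_edge F x y a b : wadj F a b ->
  ~~ ((a == x) && (b == y)) -> ~~ ((a == y) && (b == x)) ->
  wadj (drop_edge F x y) a b.
Proof.
rewrite /wadj !mem_filter !xpair_eqE [(b == x) && _]andbC [(b == y) && _]andbC.
by move=> /orP [] -> /negbTE -> /negbTE ->; rewrite ?orbT.
Qed.

Lemma sum_edges_drop_edge F x y :
  \sum_(f <- F) c f.1 f.2 = \sum_(f <- drop_edge F x y) c f.1 f.2 +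
    \sum_(f <- F | (f == (x, y)) || (f == (y, x))) c f.1 f.2.
Proof.
rewrite big_filter [LHS](bigID (fun f => (f == (x, y)) || (f == (y, x)))) addrC.
by rewrite /=; congr (_ + _); apply: eq_bigl => f; rewrite negb_or.
Qed.

Lemma le_sum_dropped_edges F x y : wadj F x y ->
  c x y <= \sum_(f <- F | (f == (x, y)) || (f == (y, x))) c f.1 f.2.
Proof.
case/orP=> [xyF | yxF].
  rewrite (big_rem _ xyF) eqxx /= lerDl.
  by apply: sumr_ge0 => f _; apply: metric_ge0.
rewrite (big_rem _ yxF) eqxx orbT /= (metric_sym hmet y) lerDl.
by apply: sumr_ge0 => f _; apply: metric_ge0.
Qed.

Lemma links_tasks_drop_edge (robot : pred V) F t1 q rho :
  path (wadj F) t1 q -> all (predC robot) (t1 :: q) -> robot rho ->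
  links_tasks robot F ->
  links_tasks [pred v | robot v || (v == t1)] (drop_edge F (last t1 q) rho).
Proof.
set x := last t1 q => Hq Hall rho_r HF t; rewrite /task inE negb_or => /andP [tt tn].
have [r rr /connectP [p Hp Er]] := HF t tt; rewrite Er in rr.
have [qt [y [Hqt Hallt Hy yr]]] := path_first_hit tt Hp rr.
set F' := drop_edge F x rho.
have keep : {in predC robot &, subrel (wadj F) (wadj F')}.
  move=> a b an bn ab; apply: wadj_drop_edge ab _ _.
    by apply: contra bn => /andP [_ /eqP ->].
  by apply: contra an => /andP [/eqP -> _].
have Hqt' : path (wadj F') t qt by apply: (sub_in_path keep Hallt Hqt).
have [/andP [/eqP Ex _] | cross] := boolP ((last t qt == x) && (y == rho)).
  exists t1; first by rewrite inE eqxx orbT.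
  apply: (@connect_trans _ _ x); first by apply/connectP; exists qt; rewrite ?Ex.
  rewrite (sym_connect_sym (wadj_sym F')); apply/connectP; exists q => //.
  exact: (sub_in_path keep Hall Hq).
exists y; first by rewrite inE yr.
apply/connectP; exists (rcons qt y); last by rewrite last_rcons.
rewrite rcons_path Hqt' /=; apply: (wadj_drop_edge Hy cross).
have an : ~~ robot (last t qt) := allP Hallt _ (mem_last t qt).
by apply: contra an => /andP [/eqP -> _].
Qed.

Lemma auction_run_behead (robot : pred V) s t1 W2 :
  auction_run robot c ((s, t1) :: W2) ->
  auction_run [pred v | robot v || (v == t1)] c W2.
Proof.
move=> hW; have [/and3P [_ tt1 _] _] := auction_round hW (W1 := [::]) erefl.
case: hW => hsz Hstep; split.
  have := cardD1 t1 [pred v | task robot v]; rewrite inE tt1 -hsz add1n => -[->].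
  by apply: eq_card => v; rewrite !inE /task negb_or andbC.
move=> W1 s0 t W3 EW /=.
have := Hstep ((s, t1) :: W1) s0 t W3; rewrite EW => /(_ erefl) /= [hs ht hn Hmin].
move: hn; rewrite !inE negb_or => /andP [tn hn].
split=> [||//|s' t' hs'].
- by rewrite -orbA -in_cons.
- by rewrite /task /= negb_or tn andbT.
rewrite /task /= negb_or => /andP [ht' t'n] hn'.
by apply: Hmin; rewrite // ?in_cons ?orbA // negb_or t'n.
Qed.

Lemma auction_cost_le_links (robot : pred V) W F :
  auction_run robot c W -> links_tasks robot F ->
  \sum_(p <- W) c p.1 p.2 <= \sum_(f <- F) c f.1 f.2.
Proof.
elim: W robot F => [|[s t1] W2 IH] robot F hW HF.
  by rewrite big_nil; apply: sumr_ge0 => f _; apply: metric_ge0.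
have [/and3P [_ tt1 _] Hmin] := auction_round hW (W1 := [::]) erefl.
have [r rr /connectP [p Hp Er]] := HF t1 tt1; rewrite Er in rr.
have [q [rho [Hq Hall Hx rho_r]]] := path_first_hit tt1 Hp rr.
have x_task : task robot (last t1 q) := allP Hall _ (mem_last t1 q).
have le_cut : c s t1 <= c (last t1 q) rho.
  by rewrite (metric_sym hmet _ rho); apply: Hmin; rewrite /available rho_r x_task.
have := IH _ _ (auction_run_behead hW) (links_tasks_drop_edge Hq Hall rho_r HF).
have := le_sum_dropped_edges Hx.
by rewrite big_cons (sum_edges_drop_edge F (last t1 q) rho) /=; lra.
Qed.

Definition plan_edges (robot : pred V) (Q : V -> seq V) : seq (V * V) :=
  flatten [seq zip (Q r) (behead (Q r)) | r <- enum robot].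

Lemma path_cost_from_zip x s :
  path_cost_from c x s = \sum_(f <- zip (x :: s) s) c f.1 f.2.
Proof. by elim: s x => [|y s IH] x /=; rewrite ?big_nil // big_cons IH. Qed.

Lemma sum_plan_edges (robot : pred V) Q :
  \sum_(f <- plan_edges robot Q) c f.1 f.2 = plan_cost robot c Q.
Proof.
rewrite big_flatten /= big_map big_enum; apply: eq_bigr => r _.
by case: (Q r) => [|x s] /=; rewrite ?big_nil // path_cost_from_zip.
Qed.

Lemma plan_links_tasks (robot : pred V) Q :
  is_plan robot Q -> links_tasks robot (plan_edges robot Q).
Proof.
case=> routes cover t tt.
have /card_gt0P [r] : (0 < #|[pred r | robot r && (t \in Q r)]|)%N by rewrite cover.
rewrite inE => /andP [rr tQ]; exists r => //.
have [s [EQ _]] := routes r rr.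
have Hp : path (wadj (plan_edges robot Q)) r s.
  by apply: path_wadj_zip => f fz; apply/flatten_mapP; exists r; rewrite ?mem_enum // EQ.
rewrite (sym_connect_sym (wadj_sym _)).
by apply: (path_connect Hp); rewrite -EQ.
Qed.

Lemma auction_cost_le_plan (robot : pred V) W Q :
  auction_run robot c W -> is_plan robot Q ->
  \sum_(p <- W) c p.1 p.2 <= plan_cost robot c Q.
Proof.
move=> hW hQ; rewrite -sum_plan_edges.
exact: auction_cost_le_links hW (plan_links_tasks hQ).
Qed.

End SpanningLowerBound.

Lemma assign_plan_cost_le (R : realType) (V : finType) (robot : pred V)
    (c : V -> V -> R) W Q :
  metric c -> auction_run robot c W -> is_plan robot Q ->
  plan_cost robot c (assign_plan robot W) <= 2%:R * plan_cost robot c Q.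
Proof.
move=> hmet hW hQ; apply: le_trans (dfshortcut_cost hW hmet) _.
by rewrite (sum_parent_cost hW) ler_pM2l ?ltr0n // (auction_cost_le_plan hmet hW hQ).
Qed.

Theorem corollary13 (R : realType) (V : finType) (robot : pred V)
    (c : V -> V -> R)
    (hRne : exists r, robot r) (hV : (3 <= #|V|)%N)
    (hmet : metric c) (hinj : injective_on_edges c)
    (W : seq (V * V)) (hW : auction_run robot c W) :
  (is_plan robot (assign_plan robot W) /\
   forall P, is_minsum robot c P ->
     plan_cost robot c (assign_plan robot W) <= 2%:R * plan_cost robot c P) /\
  (forall c' : V -> V -> R,
     (forall x y, c' x y = c' y x) ->
     (forall x y, x != y ->
        ((c x y)%:E - dlow robot c W x y < (c' x y)%:E)%E /\
        ((c' x y)%:E <= (c x y)%:E + dup robot c W x y)%E) ->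
     forall W', auction_run robot c' W' ->
       W' = W /\ assign_plan robot W' = assign_plan robot W).
Proof.
split.
  split=> [|P [hP _]]; first exact: (dfshortcut_is_plan hW hmet).
  exact: assign_plan_cost_le hmet hW hP.
by move=> c' _ hc' W' hW'; rewrite (auction_robust hW hc' hW').
Qed.
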